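(* Let $\gamma>0$, let $\mathcal F=\{f_\vartheta:\mathcal X\to[-1,1]:\vartheta\in\Theta\}$ be a class of functions with parameter space $\Theta$, $\mathcal D$ a probability distribution over $\mathcal X$ and $\mu$ a probability measure over $\Theta$. For $\phi,\vartheta\in\Theta$ let $l^\phi(\vartheta)=\frac12\mathbb E_{x\sim\mathcal D}[(f_\phi(x)-f_\vartheta(x))^2]$. Then for every $\vartheta\in\Theta$, $$\mathrm{Var}_{\phi\sim\mu}[l^\phi(\vartheta)]\le4\sqrt{\mathrm{Var}_{\phi\sim\mu}[f_\phi]}\le4\sqrt{\mathbb E_{\phi\sim\mu,\,x\sim\mathcal D}[f_\phi(x)^2]},$$ where $\mathrm{Var}_{\phi\sim\mu}[f_\phi]=\mathbb E_{\phi\sim\mu}[\langle f_\phi,f_\phi\rangle_{\mathcal D}]-\langle\mathbb E_{\phi\sim\mu}[f_\phi],\mathbb E_{\phi\sim\mu}[f_\phi]\rangle_{\mathcal D}$.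
   Context: $\langle f,g\rangle_{\mathcal D}=\mathbb E_{x\sim\mathcal D}[f(x)g(x)]$ is the $L^2(\mathcal D)$ inner product; $\mathbb E_{\phi\sim\mu}[f_\phi]$ denotes the pointwise mean function $x\mapsto\mathbb E_{\phi\sim\mu}[f_\phi(x)]$. *)

From HB Require Import structures.
From mathcomp Require Import all_boot all_order all_algebra.
From mathcomp Require Import all_classical all_reals all_analysis.
Set Implicit Arguments. Unset Strict Implicit. Unset Printing Implicit Defensive.
Import Order.TTheory GRing.Theory Num.Theory.
Local Open Scope classical_set_scope.
Local Open Scope ring_scope.

Section defs.
Context {R : realType}.

Definition Ex {d} {T : measurableType d} (P : probability T R) (g : T -> R) : R :=
  Rintegral P setT g.

Definition VarR {d} {T : measurableType d} (P : probability T R) (g : T -> R) : R :=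
  Ex P (fun t => g t ^+ 2) - (Ex P g) ^+ 2.

Definition innerD {d} {X : measurableType d} (D : probability X R) (g h : X -> R) : R :=
  Ex D (fun x => g x * h x).

Definition meanf {d1 d2} {Th : measurableType d1} {X : measurableType d2}
  (mu : probability Th R) (f : Th -> X -> R) : X -> R :=
  fun x => Ex mu (fun phi => f phi x).

Definition VarF {d1 d2} {Th : measurableType d1} {X : measurableType d2}
  (mu : probability Th R) (D : probability X R) (f : Th -> X -> R) : R :=
  Ex mu (fun phi => innerD D (f phi) (f phi)) - innerD D (meanf mu f) (meanf mu f).

Definition lossl {d1 d2} {Th : measurableType d1} {X : measurableType d2}
  (D : probability X R) (f : Th -> X -> R) (phi theta : Th) : R :=
  2^-1 * Ex D (fun x => (f phi x - f theta x) ^+ 2).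
End defs.

From HB Require Import structures.
From mathcomp Require Import all_boot all_order all_algebra.
From mathcomp Require Import all_classical all_reals all_analysis.
From mathcomp Require Import measurable_realfun lebesgue_integral_fubini.
From mathcomp Require Import ring lra.
Set Implicit Arguments. Unset Strict Implicit. Unset Printing Implicit Defensive.
Import Order.TTheory GRing.Theory Num.Theory.
Local Open Scope classical_set_scope.
Local Open Scope ring_scope.

(* Let m be the mean function and c the loss of m at theta.  Since a
   variance is at most the mean square deviation from any constant,
   Var[l^phi(theta)] <= E_mu[(l^phi(theta) - c)^2].  Expanding the squares,
   l^phi(theta) - c = 1/2 E_D[(f_phi - m)(f_phi + m - 2 f_theta)], and as
   |f_phi + m - 2 f_theta| <= 4, the AM-GM inequality 2|h| <= h^2/s + s gives
   |l^phi(theta) - c| <= H(phi)/s + s with H(phi) = E_D[(f_phi - m)^2], for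
   every s > 0.  Both losses lie in [0, 2], so the square of their difference
   is at most twice its absolute value, and since E_mu H = Var[f_phi] we get
   Var[l^phi(theta)] <= 2 (Var[f_phi]/s + s); the choice s = sqrt(Var[f_phi])
   gives the first inequality.  The second one is E_D[m^2] >= 0. *)

Lemma half_sqr_sub_sqr_le (R : realFieldType) (a b t s : R) :
  -1 <= a <= 1 -> -1 <= b <= 1 -> -1 <= t <= 1 -> 0 < s ->
  2^-1 * `|(a - t) ^+ 2 - (b - t) ^+ 2| <= (a - b) ^+ 2 / s + s.
Proof.
move=> /andP[? ?] /andP[? ?] /andP[? ?] s0.
have amgm : 2 * `|a - b| <= (a - b) ^+ 2 / s + s.
  rewrite -subr_ge0 (_ : _ - _ = (`|a - b| - s) ^+ 2 / s) ?divr_ge0 ?sqr_ge0 ?ltW //.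
  by rewrite -[(a - b) ^+ 2]real_normK ?num_real //; field; rewrite gt_eqF.
have -> : (a - t) ^+ 2 - (b - t) ^+ 2 = (a - b) * (a + b - 2 * t) by ring.
have : `|a + b - 2 * t| <= 4 by rewrite ler_norml; apply/andP; split; lra.
rewrite normrM; have := normr_ge0 (a - b); nra.
Qed.

Lemma le_4sqrt_of_AMGM (R : rcfType) (V W : R) : 0 <= V ->
  (forall s, 0 < s -> W <= 2 * (V / s + s)) -> W <= 4 * Num.sqrt V.
Proof.
move=> V0 WV; have [V_gt0|V_le0] := ltP 0 V.
  have sV_gt0 : 0 < Num.sqrt V by rewrite sqrtr_gt0.
  have : V / Num.sqrt V = Num.sqrt V.
    by rewrite -{1}(sqr_sqrtr V0) expr2 mulfK // gt_eqF.
  by have := WV _ sV_gt0; lra.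
have V_eq0 : V = 0 by apply/eqP; rewrite eq_le V_le0 V0.
rewrite V_eq0 in WV *; rewrite sqrtr0 mulr0; apply/ler_addgt0Pr => e e_gt0.
have := WV (e / 2) (divr_gt0 e_gt0 (ltr0n R 2)); rewrite mul0r add0r; lra.
Qed.

Section bounded_measurable.
Context d (T : measurableType d) (R : realType).
Implicit Types u v : T -> R.

Definition bounded_measurable u :=
  measurable_fun setT u /\ exists M, forall t, `|u t| <= M.

Lemma bounded_measurable_cst (r : R) : bounded_measurable (fun=> r).
Proof. by split; [exact: measurable_cst | exists `|r|]. Qed.

Lemma bounded_measurableD u v : bounded_measurable u -> bounded_measurable v ->
  bounded_measurable (fun t => u t + v t).
Proof.
move=> [mu [M uM]] [mv [N vN]]; split; first exact: measurable_funD.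
by exists (M + N) => t; rewrite (le_trans (ler_normD _ _)) ?lerD.
Qed.

Lemma bounded_measurableB u v : bounded_measurable u -> bounded_measurable v ->
  bounded_measurable (fun t => u t - v t).
Proof.
move=> [mu [M uM]] [mv [N vN]]; split; first exact: measurable_funB.
by exists (M + N) => t; rewrite (le_trans (ler_normB _ _)) ?lerD.
Qed.

Lemma bounded_measurableM u v : bounded_measurable u -> bounded_measurable v ->
  bounded_measurable (fun t => u t * v t).
Proof.
move=> [mu [M uM]] [mv [N vN]]; split; first exact: measurable_funM.
exists (`|M| * `|N|) => t; rewrite normrM ler_pM //.
- exact: le_trans (uM t) (ler_norm M).
- exact: le_trans (vN t) (ler_norm N).
Qed.

Lemma bounded_measurableX u n : bounded_measurable u ->
  bounded_measurable (fun t => u t ^+ n).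
Proof.
move=> bu; elim: n => [|n IHn]; first exact: bounded_measurable_cst.
under [X in bounded_measurable X]funext do rewrite exprS.
exact: bounded_measurableM.
Qed.

Lemma bounded_measurable_normr u : bounded_measurable u ->
  bounded_measurable (fun t => `|u t|).
Proof.
move=> [mu [M uM]]; split; first exact: measurableT_comp (@normr_measurable R setT) mu.
by exists M => t; rewrite normr_id.
Qed.

Lemma bounded_measurable_integrable (P : {finite_measure set T -> \bar R}) u :
  bounded_measurable u -> P.-integrable setT (EFin \o u).
Proof.
move=> [mu [M uM]]; apply: measurable_bounded_integrable => //.
  by rewrite -ge0_fin_numE // fin_num_measure.
exists M; split; first exact: num_real.
by move=> N MN t _; apply: le_trans (uM t) (ltW MN).
Qed.

End bounded_measurable.

Section bounded_measurable_pair.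
Context d1 d2 (T1 : measurableType d1) (T2 : measurableType d2) (R : realType).

Lemma bounded_measurable_pair1 (F : T1 * T2 -> R) y :
  bounded_measurable F -> bounded_measurable (fun x => F (x, y)).
Proof.
by move=> [mF [M FM]]; split; [exact: measurable_fun_pair1 | exists M].
Qed.

Lemma bounded_measurable_pair2 (F : T1 * T2 -> R) x :
  bounded_measurable F -> bounded_measurable (fun y => F (x, y)).
Proof.
by move=> [mF [M FM]]; split; [exact: measurable_fun_pair2 | exists M].
Qed.

Lemma bounded_measurable_snd (v : T2 -> R) :
  bounded_measurable v -> bounded_measurable (fun z : T1 * T2 => v z.2).
Proof.
by move=> [mv [M vM]]; split; [exact: measurableT_comp | exists M].
Qed.

End bounded_measurable_pair.

(* [B] is tried before [D] because [u t - v t] also matches [u t + v t]. *)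
Ltac bounded_measurable_closure :=
  repeat first [ assumption | apply: bounded_measurable_integrable
    | apply: bounded_measurableB | apply: bounded_measurableD
    | apply: bounded_measurableM | apply: bounded_measurableX
    | apply: bounded_measurable_normr
    | apply: bounded_measurable_cst ].

Section expectation.
Context d (T : measurableType d) (R : realType) (P : probability T R).
Implicit Types u v : T -> R.
Local Notation integrable u := (P.-integrable setT (EFin \o u)).

Lemma Ex_cst (r : R) : Ex P (fun=> r) = r.
Proof. by rewrite /Ex Rintegral_cst //= probability_setT mulr1. Qed.

Lemma ExD u v : integrable u -> integrable v ->
  Ex P (fun t => u t + v t) = Ex P u + Ex P v.
Proof. exact: RintegralD. Qed.

Lemma ExB u v : integrable u -> integrable v ->
  Ex P (fun t => u t - v t) = Ex P u - Ex P v.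
Proof. exact: RintegralB. Qed.

Lemma ExZl r u : integrable u -> Ex P (fun t => r * u t) = r * Ex P u.
Proof. exact: RintegralZl. Qed.

Lemma ExZr r u : integrable u -> Ex P (fun t => u t * r) = Ex P u * r.
Proof. exact: RintegralZr. Qed.

Lemma Ex_ge0 u : (forall t, 0 <= u t) -> 0 <= Ex P u.
Proof. by move=> u0; apply: Rintegral_ge0. Qed.

Lemma Ex_le u v : integrable u -> integrable v -> (forall t, u t <= v t) ->
  Ex P u <= Ex P v.
Proof. by move=> iu iv uv; apply: le_Rintegral. Qed.

Lemma normr_Ex_le u : integrable u -> `|Ex P u| <= Ex P (fun t => `|u t|).
Proof. exact: le_normr_Rintegral. Qed.

Lemma Ex_between u a b : integrable u -> (forall t, a <= u t <= b) ->
  a <= Ex P u <= b.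
Proof.
move=> iu uab; rewrite -[a]Ex_cst -[b]Ex_cst.
by apply/andP; split; apply: Ex_le => // [|t]; bounded_measurable_closure;
  case/andP: (uab t).
Qed.

Lemma Ex_sqr_sub u c : bounded_measurable u ->
  Ex P (fun t => (u t - c) ^+ 2) = VarR P u + (Ex P u - c) ^+ 2.
Proof.
move=> bu; rewrite (_ : (fun t => _) = fun t => (u t ^+ 2 + - (2 * c) * u t) + c ^+ 2);
  last by apply/funext => t; ring.
by rewrite ExD ?ExD ?ExZl ?Ex_cst /VarR; [ring | bounded_measurable_closure..].
Qed.

Lemma VarR_le_Ex_sqr_sub u c : bounded_measurable u ->
  VarR P u <= Ex P (fun t => (u t - c) ^+ 2).
Proof. by move=> bu; rewrite Ex_sqr_sub // lerDl sqr_ge0. Qed.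

End expectation.

Section fubini.
Context d1 d2 (T1 : measurableType d1) (T2 : measurableType d2) (R : realType).
Variables (mu : probability T1 R) (D : probability T2 R) (F : T1 * T2 -> R).
Hypothesis bF : bounded_measurable F.

(* The finite measure structure of [mu \x D] is only found through its
   probability instance. *)
Let iF : (mu \x D)%E.-integrable setT (EFin \o F).
Proof. exact: (bounded_measurable_integrable ((mu \x D)%E : probability _ R) bF). Qed.

Let sections_bounded : exists M, forall x y, -M <= F (x, y) <= M.
Proof. by have [_ [M FM]] := bF; exists M => x y; rewrite -ler_norml. Qed.

Lemma bounded_measurable_fubini_F :
  bounded_measurable (fun x => Ex D (fun y => F (x, y))).
Proof.
have [M FM] := sections_bounded; split.
  exact: measurableT_comp (fine_measurable measurableT) (measurable_fubini_F iF).
exists M => x; rewrite ler_norml; apply: Ex_between => //.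
exact/bounded_measurable_integrable/bounded_measurable_pair2.
Qed.

Lemma bounded_measurable_fubini_G :
  bounded_measurable (fun y => Ex mu (fun x => F (x, y))).
Proof.
have [M FM] := sections_bounded; split.
  exact: measurableT_comp (fine_measurable measurableT) (measurable_fubini_G iF).
exists M => y; rewrite ler_norml; apply: Ex_between => //.
exact/bounded_measurable_integrable/bounded_measurable_pair1.
Qed.

Lemma Ex_fubini :
  Ex mu (fun x => Ex D (fun y => F (x, y))) =
  Ex D (fun y => Ex mu (fun x => F (x, y))).
Proof.
rewrite /Ex /Rintegral; congr fine.
transitivity (\int[mu]_x \int[D]_y (EFin \o F) (x, y))%E.
  apply: eq_integral => x _; rewrite fineK // integrable_fin_num //.
  exact: (bounded_measurable_integrable D (bounded_measurable_pair2 x bF)).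
rewrite Fubini //; apply: eq_integral => y _; rewrite fineK // integrable_fin_num //.
exact: (bounded_measurable_integrable mu (bounded_measurable_pair1 y bF)).
Qed.

End fubini.

Section variance_of_class.
Context d1 d2 (Th : measurableType d1) (X : measurableType d2) (R : realType).
Variables (mu : probability Th R) (D : probability X R) (f : Th -> X -> R).
Hypothesis bf : bounded_measurable (fun z : Th * X => f z.1 z.2).

Lemma bounded_measurable_section phi : bounded_measurable (f phi).
Proof. exact: (bounded_measurable_pair2 phi bf). Qed.

Lemma bounded_measurable_meanf : bounded_measurable (meanf mu f).
Proof. exact: (bounded_measurable_fubini_G mu D bf). Qed.

Lemma Ex_sqr_sub_meanf :
  Ex mu (fun phi => Ex D (fun x => (f phi x - meanf mu f x) ^+ 2)) = VarF mu D f.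
Proof.
set m := meanf mu f; have bm : bounded_measurable m := bounded_measurable_meanf.
have bfm : bounded_measurable (fun z : Th * X => f z.1 z.2 * m z.2).
  exact/bounded_measurableM/bounded_measurable_snd.
have inner phi : Ex D (fun x => (f phi x - m x) ^+ 2) =
    innerD D (f phi) (f phi) + innerD D m m - 2 * Ex D (fun x => f phi x * m x).
  have bfphi := bounded_measurable_section phi.
  rewrite (_ : (fun x => _) = fun x =>
      f phi x * f phi x + m x * m x - 2 * (f phi x * m x)); last first.
    by apply/funext => x; ring.
  by rewrite ExB ?ExD ?ExZl; bounded_measurable_closure.
have cross : Ex mu (fun phi => Ex D (fun x => f phi x * m x)) = innerD D m m.
  rewrite (Ex_fubini mu D bfm); congr Ex; apply/funext => x /=.
  by rewrite ExZr //; exact: (bounded_measurable_integrable mu (bounded_measurable_pair1 x bf)).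
have bff := bounded_measurableM bf bf.
have bEff := bounded_measurable_fubini_F mu D bff.
have bEfm := bounded_measurable_fubini_F mu D bfm.
rewrite (funext inner) ExB ?ExD ?ExZl ?Ex_cst ?cross /VarF; first ring.
all: bounded_measurable_closure.
Qed.

Lemma VarF_ge0 : 0 <= VarF mu D f.
Proof.
by rewrite -Ex_sqr_sub_meanf; apply: Ex_ge0 => phi; apply: Ex_ge0 => x; exact: sqr_ge0.
Qed.

Lemma VarF_le_Ex_sqr : VarF mu D f <= Ex mu (fun phi => Ex D (fun x => f phi x ^+ 2)).
Proof. by rewrite /VarF gerBl; apply: Ex_ge0 => x; rewrite -expr2 sqr_ge0. Qed.

End variance_of_class.

Section loss_variance.
Context d1 d2 (Th : measurableType d1) (X : measurableType d2) (R : realType).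
Variables (mu : probability Th R) (D : probability X R) (f : Th -> X -> R).
Hypothesis bf : bounded_measurable (fun z : Th * X => f z.1 z.2).
Hypothesis f_between : forall phi x, -1 <= f phi x <= 1.
Variable theta : Th.

Let m := meanf mu f.
Let c := 2^-1 * Ex D (fun x => (m x - f theta x) ^+ 2).
Let H phi := Ex D (fun x => (f phi x - m x) ^+ 2).

Let meanf_between x : -1 <= m x <= 1.
Proof.
apply: Ex_between => //.
exact: (bounded_measurable_integrable mu (bounded_measurable_pair1 x bf)).
Qed.

Let half_Ex_sqr_sub_between (u v : X -> R) :
  bounded_measurable u -> bounded_measurable v ->
  (forall x, -1 <= u x <= 1) -> (forall x, -1 <= v x <= 1) ->
  0 <= 2^-1 * Ex D (fun x => (u x - v x) ^+ 2) <= 2.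
Proof.
move=> bu bv u1 v1.
have : 0 <= Ex D (fun x => (u x - v x) ^+ 2) <= 4.
  apply: Ex_between => [|x]; first by bounded_measurable_closure.
  have /andP[? ?] := u1 x; have /andP[? ?] := v1 x.
  by rewrite sqr_ge0 /=; nra.
by move=> /andP[? ?]; apply/andP; split; lra.
Qed.

Lemma lossl_sub_le phi s : 0 < s -> `|lossl D f phi theta - c| <= H phi / s + s.
Proof.
move=> s_gt0.
have bfphi := bounded_measurable_section bf phi.
have bftheta := bounded_measurable_section bf theta.
have bm : bounded_measurable m := bounded_measurable_meanf mu D bf.
have pointwise x : 2^-1 * `|(f phi x - f theta x) ^+ 2 - (m x - f theta x) ^+ 2|
    <= (f phi x - m x) ^+ 2 / s + s.
  exact: half_sqr_sub_sqr_le (f_between _ _) (meanf_between x) (f_between _ _) s_gt0.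
rewrite /lossl /c -mulrBr -ExB; [|bounded_measurable_closure..].
rewrite normrM ger0_norm ?invr_ge0 //.
apply: le_trans (ler_wpM2l _ (normr_Ex_le _)) _; [by rewrite invr_ge0|bounded_measurable_closure|].
rewrite -ExZl; [|bounded_measurable_closure].
apply: le_trans (Ex_le _ _ pointwise) _; [bounded_measurable_closure..|].
by rewrite /H ExD ?ExZr ?Ex_cst //; bounded_measurable_closure.
Qed.

Lemma sqr_lossl_sub_le phi s : 0 < s ->
  (lossl D f phi theta - c) ^+ 2 <= 2 * (H phi / s + s).
Proof.
move=> s_gt0.
have bftheta := bounded_measurable_section bf theta.
have /andP[? ?] : 0 <= lossl D f phi theta <= 2.
  exact: half_Ex_sqr_sub_between (bounded_measurable_section bf phi) _ _ _.
have /andP[? ?] : 0 <= c <= 2.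
  exact: half_Ex_sqr_sub_between (bounded_measurable_meanf mu D bf) _ _ _.
have := lossl_sub_le phi s_gt0.
rewrite -real_normK ?num_real //; have := normr_ge0 (lossl D f phi theta - c).
have : `|lossl D f phi theta - c| <= 2 by rewrite ler_norml; apply/andP; split; lra.
nra.
Qed.

Lemma VarR_lossl_le s : 0 < s ->
  VarR mu (fun phi => lossl D f phi theta) <= 2 * (VarF mu D f / s + s).
Proof.
move=> s_gt0.
have bm : bounded_measurable m := bounded_measurable_meanf mu D bf.
have bloss : bounded_measurable (fun phi => lossl D f phi theta).
  apply: bounded_measurableM; first exact: bounded_measurable_cst.
  apply: (bounded_measurable_fubini_F mu D (F := fun z => (f z.1 z.2 - f theta z.2) ^+ 2)).
  by apply/bounded_measurableX/bounded_measurableB/bounded_measurable_snd => //;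
    exact: bounded_measurable_section.
have bH : bounded_measurable H.
  apply: (bounded_measurable_fubini_F mu D (F := fun z => (f z.1 z.2 - m z.2) ^+ 2)).
  exact/bounded_measurableX/bounded_measurableB/bounded_measurable_snd.
apply: le_trans (VarR_le_Ex_sqr_sub _ c bloss) _.
rewrite -Ex_sqr_sub_meanf //.
have -> : 2 * (Ex mu H / s + s) = Ex mu (fun phi => 2 * (H phi / s + s)).
  by rewrite ExZl ?ExD ?ExZr ?Ex_cst //; bounded_measurable_closure.
apply: Ex_le; [bounded_measurable_closure..|] => phi.
exact: sqr_lossl_sub_le.
Qed.

End loss_variance.

Theorem mainTheorem14 (R : realType) (gamma : R) (d1 d2 : measure_display)
  (Theta : measurableType d1) (X : measurableType d2)
  (f : Theta -> X -> R) (D : probability X R) (mu : probability Theta R) :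
  0 < gamma ->
  measurable_fun [set: Theta * X] (fun z => f z.1 z.2) ->
  (forall phi x, -1 <= f phi x <= 1) ->
  forall theta : Theta,
    VarR mu (fun phi => lossl D f phi theta) <= 4 * Num.sqrt (VarF mu D f) /\
    4 * Num.sqrt (VarF mu D f)
      <= 4 * Num.sqrt (Ex mu (fun phi => Ex D (fun x => f phi x ^+ 2))).
Proof.
move=> _ mf f_between theta.
have bf : bounded_measurable (fun z : Theta * X => f z.1 z.2).
  by split => //; exists 1 => z; rewrite ler_norml f_between.
split.
  apply: le_4sqrt_of_AMGM (VarF_ge0 mu D bf) _ => s s_gt0.
  exact: VarR_lossl_le.
rewrite ler_wpM2l // ler_sqrt ?VarF_le_Ex_sqr //.
by apply: Ex_ge0 => phi; apply: Ex_ge0 => x; exact: sqr_ge0.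
Qed.
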